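(* Let $d, n, D, k$ be positive integers, let $h:\mathbb{R}\to\mathbb{R}$ be any function (applied entrywise), let $\sigma$ denote the sigmoid function (applied entrywise), and let $W_o\in\mathbb{R}^{d\times kD}$, $W_s\in\mathbb{R}^{kD\times d}$, $W_1,\dots,W_k\in\mathbb{R}^{D\times d}$. For $X\in\mathbb{R}^{d\times n}$ define $$H(X)=\begin{bmatrix} h(W_1X)\\ h(W_1X)\circ h(W_2X)\\ \vdots\\ \prod_{m=1}^k h(W_mX)\end{bmatrix}\mathbf{1}_n\in\mathbb{R}^{kD\times 1},\qquad \mathrm{PoM}(X)=W_o\left[\sigma(W_sX)\circ \big(H(X)\mathbf{1}_n^\top\big)\right]\in\mathbb{R}^{d\times n},$$ where $\circ$ and $\prod$ denote entrywise (Hadamard) products, the blocks are stacked vertically, and $\mathbf{1}_n\in\mathbb{R}^n$ is the all-ones vector. Then $\mathrm{PoM}$ is permutation equivariant: for every $X\in\mathbb{R}^{d\times n}$ and every $n\times n$ permutation matrix $P$ (permuting columns), $\mathrm{PoM}(XP)=\mathrm{PoM}(X)P$.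
   Context: The columns of $X$ are viewed as a sequence (set) of $n$ tokens in $\mathbb{R}^d$; $\mathrm{PoM}$ is called the Polynomial Mixer of degree $k$. *)

From mathcomp Require Import all_boot all_fingroup all_algebra.
From mathcomp Require Import all_classical all_reals all_analysis.
Set Implicit Arguments. Unset Strict Implicit. Unset Printing Implicit Defensive.
Import GRing.Theory Num.Theory.
Local Open Scope ring_scope.

Definition sigmoid (R : realType) (x : R) : R := (1 + expR (- x))^-1.

(* block index and in-block index of row r of a vertical stack of k blocks of height D *)
Lemma blk_lt (k D : nat) (r : 'I_(k * D)) : (r %/ D < k)%N.
Proof. by rewrite ltn_divLR ?(ltn_ord r) //; case: D r => [|D] r //; rewrite muln0 in r *; case: r. Qed.

Lemma inblk_lt (k D : nat) (r : 'I_(k * D)) : (r %% D < D)%N.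
Proof. by rewrite ltn_mod; case: D r => [|D] r //; rewrite muln0 in r *; case: r. Qed.

(* H(X) : stacked blocks [h(W_1 X); h(W_1X)∘h(W_2X); ...; prod_{m=1}^k h(W_m X)] times 1_n *)
Definition PoM_H (R : realType) (d n D k : nat) (h : R -> R)
  (W : 'I_k -> 'M[R]_(D, d)) (X : 'M[R]_(d, n)) : 'cV[R]_(k * D) :=
  (\matrix_(r < k * D, t < n)
     \prod_(m < k | (m <= r %/ D)%N)
        h ((W m *m X) (Ordinal (inblk_lt r)) t)) *m const_mx 1.

Definition PoM (R : realType) (d n D k : nat) (h : R -> R)
  (Wo : 'M[R]_(d, k * D)) (Ws : 'M[R]_(k * D, d)) (W : 'I_k -> 'M[R]_(D, d))
  (X : 'M[R]_(d, n)) : 'M[R]_(d, n) :=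
  Wo *m (map2_mx (fun a b => a * b) (map_mx (@sigmoid R) (Ws *m X))
           (PoM_H h W X *m (const_mx 1 : 'rV[R]_n))).

From mathcomp Require Import all_boot all_fingroup all_algebra.
From mathcomp Require Import all_classical all_reals all_analysis.
Local Open Scope ring_scope.

(* Every ingredient of PoM acts on the tokens column by column, except the
   pooling H(X), a sum over the columns, which is therefore invariant; so
   permuting the columns of X permutes those of PoM(X). *)

Lemma mulmx_col_perm {R : pzSemiRingType} {m n p : nat} (s : 'S_p)
    (A : 'M[R]_(m, n)) (B : 'M[R]_(n, p)) :
  A *m col_perm s B = col_perm s (A *m B).
Proof. by rewrite !col_permE mulmxA. Qed.

Lemma mul_col_perm_const {R : pzSemiRingType} {m n p : nat} (s : 'S_n)
    (A : 'M[R]_(m, n)) (a : R) :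
  col_perm s A *m (const_mx a : 'M[R]_(n, p)) = A *m const_mx a.
Proof. by rewrite mul_col_perm row_perm_const. Qed.

Lemma col_perm_mul_const {R : pzSemiRingType} {m n p : nat} (s : 'S_p)
    (A : 'M[R]_(m, n)) (a : R) :
  col_perm s (A *m (const_mx a : 'M[R]_(n, p))) = A *m const_mx a.
Proof. by rewrite -mulmx_col_perm col_perm_const. Qed.

Lemma PoM_H_col_perm {R : realType} {d n D k : nat} (h : R -> R)
    (W : 'I_k -> 'M[R]_(D, d)) (X : 'M[R]_(d, n)) (s : 'S_n) :
  PoM_H h W (col_perm s X) = PoM_H h W X.
Proof.
rewrite /PoM_H -[in RHS](mul_col_perm_const s); congr (_ *m _).
apply/matrixP => r t; rewrite !mxE.
by apply: eq_bigr => m _; rewrite mulmx_col_perm mxE.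
Qed.

Lemma PoM_col_perm {R : realType} {d n D k : nat} (h : R -> R)
    (Wo : 'M[R]_(d, k * D)) (Ws : 'M[R]_(k * D, d))
    (W : 'I_k -> 'M[R]_(D, d)) (X : 'M[R]_(d, n)) (s : 'S_n) :
  PoM h Wo Ws W (col_perm s X) = col_perm s (PoM h Wo Ws W X).
Proof.
rewrite /PoM PoM_H_col_perm mulmx_col_perm map_col_perm.
by rewrite -{1}(col_perm_mul_const s (PoM_H h W X)) map2_col_perm mulmx_col_perm.
Qed.

Theorem proposition1 (R : realType) (d n D k : nat)
  (hd : (0 < d)%N) (hn : (0 < n)%N) (hD : (0 < D)%N) (hk : (0 < k)%N)
  (h : R -> R) (Wo : 'M[R]_(d, k * D)) (Ws : 'M[R]_(k * D, d))
  (W : 'I_k -> 'M[R]_(D, d)) (X : 'M[R]_(d, n)) (s : 'S_n) :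
  PoM h Wo Ws W (X *m perm_mx s) = PoM h Wo Ws W X *m perm_mx s.
Proof. by rewrite -[s]invgK -2!col_permE PoM_col_perm. Qed.
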